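(* Let $\gamma>0$ and $S=(S_1,\ldots,S_n)$ be nonnegative nonzero symmetric $p\times p$ matrices. Then for all $\Delta,\Delta'\in\mathcal D_n^+$, $$d_s\big(\Lambda^S(\Delta),\Lambda^S(\Delta')\big)\le\max\big(\phi^S_\gamma(\Delta),\phi^S_\gamma(\Delta')\big)\,d_s(\Delta,\Delta'),$$ and in particular $\Lambda^S:\mathcal D_n^+\to\mathcal D_n^+$ is stable.
   Context: $\mathcal D_n^+$: $n\times n$ diagonal matrices with positive diagonal entries; $d_s(\Delta,\Delta')=\max_i\frac{|\Delta_i-\Delta'_i|}{\sqrt{\Delta_i\Delta'_i}}$; a map is stable if it is $1$-Lipschitz for $d_s$. $Q_\gamma(S,\Delta)=\big(\frac1n\sum_i\Delta_iS_i+\gamma I_p\big)^{-1}$, $\phi^S_\gamma(\Delta)=\|I_p-\gamma Q_\gamma(S,\Delta)\|$ (spectral norm). $\Lambda^S(\Delta)\in\mathcal D_n^+$ is the unique solution of $\Lambda^S(\Delta)_i=\frac1n\operatorname{tr}\Big(S_i\big(\frac1n\sum_{j=1}^n\frac{\Delta_jS_j}{1+\Delta_j\Lambda^S(\Delta)_j}+\gamma I_p\big)^{-1}\Big)$, $i\in[n]$. *)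

From HB Require Import structures.
From mathcomp Require Import all_boot all_order all_algebra.
From mathcomp Require Import all_classical all_reals.
Set Implicit Arguments. Unset Strict Implicit. Unset Printing Implicit Defensive.
Import Order.TTheory GRing.Theory Num.Theory.
Local Open Scope ring_scope.
Local Open Scope classical_set_scope.

Section Defs.
Variable R : realType.

Definition vnorm (p : nat) (x : 'cV[R]_p) : R :=
  Num.sqrt (\sum_(i < p) x i ord0 ^+ 2).

Definition specnorm (p : nat) (A : 'M[R]_p) : R :=
  sup [set vnorm (A *m x) | x in [set x : 'cV[R]_p | vnorm x <= 1]].

(* symmetric positive semidefinite ("nonnegative symmetric") matrix *)
Definition psd_sym (p : nat) (S : 'M[R]_p) : Prop :=
  S^T = S /\ forall x : 'cV[R]_p, 0 <= (x^T *m S *m x) ord0 ord0.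

(* an element of D_n^+ is represented by its diagonal (positive entries) *)
Definition posdiag (n : nat) (D : 'I_n -> R) : Prop := forall i, 0 < D i.

Definition d_s (n : nat) (D D' : 'I_n -> R) : R :=
  \big[Num.max/0]_(i < n) (`|D i - D' i| / Num.sqrt (D i * D' i)).

Definition Qg (n p : nat) (gamma : R) (S : 'I_n -> 'M[R]_p) (D : 'I_n -> R)
  : 'M[R]_p :=
  invmx ((n%:R)^-1 *: (\sum_(i < n) D i *: S i) + gamma%:M).

Definition phiS (n p : nat) (gamma : R) (S : 'I_n -> 'M[R]_p) (D : 'I_n -> R)
  : R := specnorm (1%:M - gamma *: Qg gamma S D).

(* L solves the defining fixed-point equation of Lambda^S(D) *)
Definition is_LambdaS (n p : nat) (gamma : R) (S : 'I_n -> 'M[R]_p)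
  (D L : 'I_n -> R) : Prop :=
  posdiag L /\
  forall i, L i = (n%:R)^-1 * \tr (S i *m invmx
      ((n%:R)^-1 *: (\sum_(j < n) (D j / (1 + D j * L j)) *: S j) + gamma%:M)).

End Defs.

From HB Require Import structures.
From mathcomp Require Import all_boot all_order all_algebra.
From mathcomp Require Import all_classical all_reals.
From mathcomp Require Import ring lra.
Import Order.TTheory GRing.Theory Num.Theory.
Local Open Scope ring_scope.
Set Implicit Arguments. Unset Strict Implicit. Unset Printing Implicit Defensive.

(** Put [b_j = (D_j^-1 + L_j)^-1] and [A(b) = 1/n sum_j b_j S_j + gamma I], so
  that [L_i = 1/n tr (S_i A(b)^-1)].  With [X = A(b)^-1] and [Y = A(b')^-1]
  the resolvent identity gives
  [L_i - L'_i = 1/n^2 sum_j (b'_j - b_j) tr (S_i X S_j Y)], and the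
  Cauchy-Schwarz inequality [tr (S_i X S_j Y)^2 <= tr (S_i X S_j X) tr (S_i Y S_j Y)]
  together with [X (1/n sum_j b_j S_j) X <= phi X], where
  [phi = ||I - gamma X||], yields [d_s(L, L') <= phi d_s(b, b')].
  Conversely [d_s] is invariant under inversion and
  [d_s(u + v, u' + v') <= max (d_s(u, u'), d_s(v, v'))], strictly so when
  [d_s(u, u') < d_s(v, v')]; hence [d_s(b, b') <= max (d_s(D, D'), d_s(L, L'))].
  As [phi <= 1], these two bounds force [d_s(L, L') <= d_s(D, D')], and then
  [d_s(L, L') <= phi d_s(D, D')]. *)

Section RelativeDistance.
Variable R : realType.
Implicit Types x y m w c u v t delta : R.

Definition rdist x y := `|x - y| / Num.sqrt (x * y).

Lemma rdist_ge0 x y : 0 <= rdist x y.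
Proof. by rewrite /rdist divr_ge0 ?sqrtr_ge0. Qed.

Lemma rdistE x y : 0 < x -> 0 < y -> `|x - y| = rdist x y * Num.sqrt (x * y).
Proof.
move=> hx hy; have hs : 0 < Num.sqrt (x * y) by rewrite sqrtr_gt0 mulr_gt0.
by rewrite /rdist divfK // gt_eqF.
Qed.

Lemma rdistV x y : 0 < x -> 0 < y -> rdist x^-1 y^-1 = rdist x y.
Proof.
move=> hx hy; rewrite /rdist -invfM sqrtrV ?mulr_ge0 ?ltW //.
set s := Num.sqrt (x * y).
have hs : 0 < s by rewrite sqrtr_gt0 mulr_gt0.
have exy : x * y = s ^+ 2 by rewrite sqr_sqrtr // mulr_ge0 ?ltW.
have -> : x^-1 - y^-1 = (y - x) / (x * y) by field; rewrite !gt_eqF.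
rewrite normrM normfV (gtr0_norm (mulr_gt0 hx hy)) distrC exy.
by field; rewrite gt_eqF.
Qed.

Lemma rdistZ c x y : 0 < c -> 0 < x -> 0 < y -> rdist (c * x) (c * y) = rdist x y.
Proof.
move=> hc hx hy; rewrite /rdist -mulrBr normrM (gtr0_norm hc).
rewrite mulrACA sqrtrM ?mulr_ge0 ?ltW // -expr2 sqrtr_sqr (gtr0_norm hc).
have hs : 0 < Num.sqrt (x * y) by rewrite sqrtr_gt0 mulr_gt0.
by field; rewrite !gt_eqF.
Qed.

Lemma sqrtrM_addr_le x x' y y' : 0 <= x -> 0 <= x' -> 0 <= y -> 0 <= y' ->
  Num.sqrt (x * x') + Num.sqrt (y * y') <= Num.sqrt ((x + y) * (x' + y')).
Proof.
have sqrtK (z : R) : 0 <= z -> exists2 a, 0 <= a & z = a ^+ 2.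
  by move=> hz; exists (Num.sqrt z); rewrite ?sqrtr_ge0 ?sqr_sqrtr.
move=> /sqrtK[a ha ->] /sqrtK[a' ha' ->] /sqrtK[c hc ->] /sqrtK[c' hc' ->].
rewrite -!exprMn !sqrtr_sqr !ger0_norm ?mulr_ge0 //.
rewrite -(ger0_norm (addr_ge0 (mulr_ge0 ha ha') (mulr_ge0 hc hc'))) -sqrtr_sqr.
rewrite ler_sqrt; last by rewrite mulr_ge0 // addr_ge0 // sqr_ge0.
have -> : (a ^+ 2 + c ^+ 2) * (a' ^+ 2 + c' ^+ 2)
          = (a * a' + c * c') ^+ 2 + (a * c' - c * a') ^+ 2 by ring.
by rewrite lerDl sqr_ge0.
Qed.

Lemma rdistD_mean x x' y y' : 0 < x -> 0 < x' -> 0 < y -> 0 < y' ->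
  rdist (x + y) (x' + y') * (Num.sqrt (x * x') + Num.sqrt (y * y'))
  <= rdist x x' * Num.sqrt (x * x') + rdist y y' * Num.sqrt (y * y').
Proof.
move=> hx hx' hy hy'.
apply: (@le_trans _ _ (rdist (x + y) (x' + y') * Num.sqrt ((x + y) * (x' + y')))).
  by rewrite ler_wpM2l ?rdist_ge0 // sqrtrM_addr_le // ltW.
rewrite -!rdistE ?addr_gt0 //.
have -> : x + y - (x' + y') = (x - x') + (y - y') by ring.
exact: ler_normD.
Qed.

Lemma rdistD_le m x x' y y' : 0 < x -> 0 < x' -> 0 < y -> 0 < y' ->
  rdist x x' <= m -> rdist y y' <= m -> rdist (x + y) (x' + y') <= m.
Proof.
move=> hx hx' hy hy' hxm hym.
have hg : 0 < Num.sqrt (x * x') by rewrite sqrtr_gt0 mulr_gt0.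
have hh : 0 <= Num.sqrt (y * y') by rewrite sqrtr_ge0.
rewrite -(@ler_pM2r _ (Num.sqrt (x * x') + Num.sqrt (y * y'))); last by lra.
apply: le_trans (rdistD_mean hx hx' hy hy') _.
by rewrite mulrDr; apply: lerD; apply: ler_wpM2r => //; exact: ltW.
Qed.

Lemma rdistD_lt m x x' y y' : 0 < x -> 0 < x' -> 0 < y -> 0 < y' ->
  rdist x x' < m -> rdist y y' <= m -> rdist (x + y) (x' + y') < m.
Proof.
move=> hx hx' hy hy' hxm hym.
have hg : 0 < Num.sqrt (x * x') by rewrite sqrtr_gt0 mulr_gt0.
have hh : 0 <= Num.sqrt (y * y') by rewrite sqrtr_ge0.
rewrite -(@ltr_pM2r _ (Num.sqrt (x * x') + Num.sqrt (y * y'))); last by lra.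
apply: le_lt_trans (rdistD_mean hx hx' hy hy') _.
rewrite mulrDr; apply: ltr_leD; first by rewrite ltr_pM2r.
exact: ler_wpM2r.
Qed.

Lemma rdist_shunt x x' y y' : 0 < x -> 0 < x' -> 0 < y -> 0 < y' ->
  rdist (x / (1 + x * y)) (x' / (1 + x' * y')) = rdist (x^-1 + y) (x'^-1 + y').
Proof.
have shuntE (z w : R) : 0 < z -> 0 < w -> z / (1 + z * w) = (z^-1 + w)^-1.
  move=> hz hw; have -> : z^-1 + w = (1 + z * w) / z by field; rewrite gt_eqF.
  by rewrite invf_div.
move=> hx hx' hy hy'.
by rewrite !shuntE // rdistV // addr_gt0 ?invr_gt0.
Qed.

Lemma d_s_ge0 n (D D' : 'I_n -> R) : 0 <= d_s D D'.
Proof.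
rewrite /d_s; elim/big_ind: _ => // [x y hx hy|i _]; first by rewrite le_max hx.
exact: rdist_ge0.
Qed.

Lemma rdist_le_d_s n (D D' : 'I_n -> R) i : rdist (D i) (D' i) <= d_s D D'.
Proof. exact: (le_bigmax 0 (fun i => rdist (D i) (D' i)) i). Qed.

Lemma d_s_le n (D D' : 'I_n -> R) m :
  0 <= m -> (forall i, rdist (D i) (D' i) <= m) -> d_s D D' <= m.
Proof. by move=> hm h; apply: bigmax_le => // i _; apply: h. Qed.

Lemma d_s_lt n (D D' : 'I_n -> R) m :
  0 < m -> (forall i, rdist (D i) (D' i) < m) -> d_s D D' < m.
Proof. by move=> hm h; apply: bigmax_lt => // i _; apply: h. Qed.

Lemma rdist_cross_le w w' c u v t delta :
  0 < w -> 0 < w' -> 0 < t -> 0 <= u -> 0 <= v ->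
  rdist w w' <= delta -> c ^+ 2 <= u * v ->
  `|w' - w| * `|c| <= delta / 2 * (t * (w * u) + w' * v / t).
Proof.
move=> hw hw' ht hu hv hdelta hc.
have hd : 0 <= delta := le_trans (rdist_ge0 w w') hdelta.
have hc' : `|c| <= Num.sqrt (u * v) by rewrite -sqrtr_sqr ler_sqrt ?mulr_ge0.
have mean : Num.sqrt (w * w') * Num.sqrt (u * v) <= (t * (w * u) + w' * v / t) / 2.
  have -> : Num.sqrt (w * w') * Num.sqrt (u * v)
            = Num.sqrt (t * (w * u) * (w' * v / t)).
    by rewrite -sqrtrM ?mulr_ge0 ?ltW //; congr Num.sqrt; field; rewrite gt_eqF.
  have hX : 0 <= (t * (w * u) + w' * v / t) / 2.
    by rewrite divr_ge0 // addr_ge0 // !mulr_ge0 // ?invr_ge0 ltW.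
  by rewrite -(ger0_norm hX) -sqrtr_sqr ler_sqrt ?sqr_ge0 // leif_AGM2.
rewrite distrC rdistE // -mulrA.
apply: (@le_trans _ _ (delta * (Num.sqrt (w * w') * Num.sqrt (u * v)))).
  apply: ler_pM; rewrite ?rdist_ge0 ?mulr_ge0 ?sqrtr_ge0 //.
  by rewrite ler_wpM2l ?sqrtr_ge0.
by rewrite -mulrA (mulrC 2^-1) ler_wpM2l.
Qed.

Definition eff_weight n (D L : 'I_n -> R) j := D j / (1 + D j * L j).

Lemma eff_weight_gt0 n (D L : 'I_n -> R) :
  posdiag D -> posdiag L -> posdiag (eff_weight D L).
Proof. by move=> hD hL j; rewrite divr_gt0 // addr_gt0 // mulr_gt0. Qed.

Lemma eff_weight_le n (D L : 'I_n -> R) j :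
  0 < D j -> 0 < L j -> eff_weight D L j <= D j.
Proof.
move=> hD hL; rewrite ler_pdivrMr ?addr_gt0 ?mulr_gt0 //.
by apply: ler_peMr; [exact: ltW | rewrite lerDl mulr_ge0 // ltW].
Qed.

Lemma d_s_eff_weight_le n (D D' L L' : 'I_n -> R) m :
  posdiag D -> posdiag D' -> posdiag L -> posdiag L' ->
  d_s D D' <= m -> d_s L L' <= m -> d_s (eff_weight D L) (eff_weight D' L') <= m.
Proof.
move=> hD hD' hL hL' hDm hLm.
apply: d_s_le => [|j]; first exact: le_trans (d_s_ge0 L L') hLm.
move: (hD j) (hD' j) (hL j) (hL' j) => x x' y y'.
rewrite /eff_weight rdist_shunt //; apply: rdistD_le; rewrite ?invr_gt0 ?rdistV //.
  exact: le_trans (rdist_le_d_s D D' j) hDm.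
exact: le_trans (rdist_le_d_s L L' j) hLm.
Qed.

Lemma d_s_eff_weight_lt n (D D' L L' : 'I_n -> R) m :
  posdiag D -> posdiag D' -> posdiag L -> posdiag L' ->
  d_s D D' < m -> d_s L L' <= m -> d_s (eff_weight D L) (eff_weight D' L') < m.
Proof.
move=> hD hD' hL hL' hDm hLm.
apply: d_s_lt => [|j]; first exact: le_lt_trans (d_s_ge0 D D') hDm.
move: (hD j) (hD' j) (hL j) (hL' j) => x x' y y'.
rewrite /eff_weight rdist_shunt //; apply: rdistD_lt; rewrite ?invr_gt0 ?rdistV //.
  exact: le_lt_trans (rdist_le_d_s D D' j) hDm.
exact: le_trans (rdist_le_d_s L L' j) hLm.
Qed.

End RelativeDistance.

Lemma discriminant_le (R : realFieldType) (a b c : R) : 0 <= c ->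
  (forall s, 0 <= a + 2 * s * b + s ^+ 2 * c) -> b ^+ 2 <= a * c.
Proof.
rewrite le_eqVlt => /orP[/eqP c0 h|c_gt0 h]; last first.
  have := mulr_ge0 (ltW c_gt0) (h (- b / c)).
  have -> : c * (a + 2 * (- b / c) * b + (- b / c) ^+ 2 * c) = a * c - b ^+ 2.
    by field; rewrite gt_eqF.
  by rewrite subr_ge0.
rewrite -c0 mulr0; have [->|b0] := eqVneq b 0; first by rewrite expr0n.
have := h (- (a + 1) / (2 * b)); rewrite -c0 mulr0 addr0.
have -> : a + 2 * (- (a + 1) / (2 * b)) * b = -1 by field; rewrite ?b0.
by rewrite oppr_ge0 ler10.
Qed.

Section QuadraticForms.
Variables (R : realFieldType) (p : nat).
Implicit Types (S P : 'M[R]_p) (x y : 'cV[R]_p).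

Definition mxform S x y := (x^T *m S *m y) ord0 ord0.
Definition vdot x y := (x^T *m y) ord0 ord0.
Definition psdmx S := forall x, 0 <= mxform S x x.

Lemma mxformC S x y : S^T = S -> mxform S x y = mxform S y x.
Proof.
move=> hS; rewrite /mxform -[in RHS](trmxK (y^T *m S *m x)) [in RHS]mxE.
by rewrite !trmx_mul trmxK hS mulmxA.
Qed.

Lemma vdotC x y : vdot x y = vdot y x.
Proof. by rewrite /vdot -[in RHS](trmxK (y^T *m x)) [in RHS]mxE trmx_mul trmxK. Qed.

Lemma mxformDl S x1 x2 y : mxform S (x1 + x2) y = mxform S x1 y + mxform S x2 y.
Proof. by rewrite /mxform linearD /= !mulmxDl mxE. Qed.

Lemma mxformDr S x y1 y2 : mxform S x (y1 + y2) = mxform S x y1 + mxform S x y2.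
Proof. by rewrite /mxform !mulmxDr mxE. Qed.

Lemma mxformZl S a x y : mxform S (a *: x) y = a * mxform S x y.
Proof. by rewrite /mxform linearZ /= -!scalemxAl mxE. Qed.

Lemma mxformZr S a x y : mxform S x (a *: y) = a * mxform S x y.
Proof. by rewrite /mxform -!scalemxAr mxE. Qed.

Lemma mxformDm S1 S2 x y : mxform (S1 + S2) x y = mxform S1 x y + mxform S2 x y.
Proof. by rewrite /mxform mulmxDr mulmxDl mxE. Qed.

Lemma mxformZm a S x y : mxform (a *: S) x y = a * mxform S x y.
Proof. by rewrite /mxform -scalemxAr -scalemxAl mxE. Qed.

Lemma mxformBm S1 S2 x y : mxform (S1 - S2) x y = mxform S1 x y - mxform S2 x y.
Proof.
by rewrite mxformDm; congr (_ + _); rewrite /mxform mulmxN mulNmx [LHS]mxE.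
Qed.

Lemma mxform_summ n (F : 'I_n -> 'M[R]_p) x y :
  mxform (\sum_j F j) x y = \sum_j mxform (F j) x y.
Proof. by rewrite /mxform mulmx_sumr mulmx_suml summxE. Qed.

Lemma mxform_scalar a x y : mxform a%:M x y = a * vdot x y.
Proof. by rewrite /mxform mul_mx_scalar -scalemxAl mxE. Qed.

Lemma mxformMr S A x y : mxform S x (A *m y) = mxform (S *m A) x y.
Proof. by rewrite /mxform !mulmxA. Qed.

Lemma mxformMl S A x y : mxform S (A *m x) y = mxform (A^T *m S) x y.
Proof. by rewrite /mxform trmx_mul !mulmxA. Qed.

Lemma vdot_mulmxr x S y : vdot x (S *m y) = mxform S x y.
Proof. by rewrite /vdot /mxform mulmxA. Qed.

Lemma vdot_mxform x y : vdot x y = mxform 1%:M x y.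
Proof. by rewrite /mxform mulmx1. Qed.

Lemma vdotE x y : vdot x y = \sum_i x i ord0 * y i ord0.
Proof. by rewrite /vdot mxE; apply: eq_bigr => i _; rewrite mxE. Qed.

Lemma vdot_ge0 x : 0 <= vdot x x.
Proof. by rewrite vdotE sumr_ge0 // => i _; rewrite -expr2 sqr_ge0. Qed.

Lemma vdot_eq0 x : vdot x x = 0 -> x = 0.
Proof.
rewrite vdotE => /psumr_eq0P x0; apply/matrixP => i j; rewrite (ord1 j) mxE.
have /eqP := x0 (fun k _ => ltac:(by rewrite -expr2 sqr_ge0)) i isT.
by rewrite mulf_eq0 orbb => /eqP.
Qed.

Lemma mxform_delta P k j : mxform P (delta_mx k ord0) (delta_mx j ord0) = P k j.
Proof. by rewrite /mxform trmx_delta -rowE -colE !mxE. Qed.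

Lemma mxform_deltal P k x : mxform P (delta_mx k ord0) x = (P *m x) k ord0.
Proof. by rewrite /mxform trmx_delta -rowE -row_mul mxE. Qed.

Lemma mxform_expand P x y s : P^T = P ->
  mxform P (x + s *: y) (x + s *: y)
  = mxform P x x + 2 * s * mxform P x y + s ^+ 2 * mxform P y y.
Proof.
move=> hP; rewrite !mxformDl !mxformDr !mxformZl !mxformZr (mxformC y x hP).
ring.
Qed.

Lemma cauchy_schwarz x y : vdot x y ^+ 2 <= vdot x x * vdot y y.
Proof.
apply: discriminant_le (vdot_ge0 y) _ => s.
have h1 : (1%:M : 'M[R]_p)^T = 1%:M by rewrite tr_scalar_mx.
by rewrite !vdot_mxform -mxform_expand // -vdot_mxform vdot_ge0.
Qed.

End QuadraticForms.

Section PositiveSemidefinite.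
Variables (R : realFieldType) (p : nat).
Implicit Types (P Q : 'M[R]_p) (x : 'cV[R]_p).

Lemma psd_diag_eq0 P k j : P^T = P -> psdmx P -> P k k = 0 -> P k j = 0.
Proof.
move=> hT hP hk; apply/eqP; rewrite -sqrf_eq0 eq_le sqr_ge0 andbT.
rewrite -(mul0r (P j j)) -hk; apply: discriminant_le.
  by rewrite -mxform_delta hP.
move=> s; rewrite -!mxform_delta -mxform_expand //; exact: hP.
Qed.

Lemma psd_eq0 P : P^T = P -> psdmx P -> (forall k, P k k = 0) -> P = 0.
Proof.
by move=> hT hP hdiag; apply/matrixP => i j; rewrite mxE (psd_diag_eq0 _ hT hP).
Qed.

(** One step of the [L D L^T] decomposition: subtracting the rank-one matrix
  carried by a nonzero pivot [P k k] kills row and column [k]. *)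
Definition schur_pivot P k :=
  P - (P k k)^-1 *: (col k P *m (col k P)^T).

Section SchurPivot.
Variables (P : 'M[R]_p) (k : 'I_p).
Hypotheses (P_sym : P^T = P) (P_psd : psdmx P) (Pkk_gt0 : 0 < P k k).

Lemma schur_pivot_sym : (schur_pivot P k)^T = schur_pivot P k.
Proof. by rewrite /schur_pivot linearB /= linearZ /= trmx_mul trmxK P_sym. Qed.

Lemma mxform_col_pivot x :
  mxform (col k P *m (col k P)^T) x x = mxform P (delta_mx k ord0) x ^+ 2.
Proof.
have colx : ((col k P)^T *m x) ord0 ord0 = mxform P (delta_mx k ord0) x.
  by rewrite mxform_deltal tr_col P_sym -row_mul mxE.
rewrite -colx /mxform mulmxA -mulmxA mxE big_ord1 expr2; congr (_ * _).
exact: vdotC.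
Qed.

Lemma schur_pivot_psd : psdmx (schur_pivot P k).
Proof.
move=> x; rewrite /schur_pivot mxformBm mxformZm mxform_col_pivot.
rewrite subr_ge0 mulrC ler_pdivrMr //; apply: discriminant_le (ltW Pkk_gt0) _.
move=> s; rewrite -mxform_delta (mxformC (delta_mx k ord0) x P_sym).
by rewrite -mxform_expand.
Qed.

Lemma schur_pivot_support :
  [set j | schur_pivot P k j j != 0] \proper [set j | P j j != 0].
Proof.
have diagE j : schur_pivot P k j j = P j j - (P k k)^-1 * P j k ^+ 2.
  by rewrite !mxE big_ord1 !mxE expr2.
apply/properP; split.
  apply/fintype.subsetP => j; rewrite !inE diagE; apply: contraNN => /eqP hj.
  by rewrite hj (psd_diag_eq0 k P_sym P_psd hj) expr0n /= mulr0 subr0.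
exists k; first by rewrite inE gt_eqF.
by rewrite inE diagE negbK expr2 mulrA mulVf ?(gt_eqF Pkk_gt0) // mul1r subrr.
Qed.

Lemma mxtrace_schur_pivot Q :
  \tr (P *m Q) = \tr (schur_pivot P k *m Q)
                 + (P k k)^-1 * mxform Q (col k P) (col k P).
Proof.
rewrite /schur_pivot mulmxBl linearB /= -scalemxAl linearZ /= -mulmxA.
by rewrite (mxtrace_mulC (col k P)) /mxtrace big_ord1 subrK.
Qed.

End SchurPivot.

Lemma mxtrace_psd_mul_ge0 P Q : P^T = P -> psdmx P -> psdmx Q -> 0 <= \tr (P *m Q).
Proof.
move: {2}#|_| (leqnn #|[set j | P j j != 0]|) => m.
elim: m P => [|m IH] P hcard hT hP hQ.
  suff -> : P = 0 by rewrite mul0mx linear0.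
  apply: psd_eq0 => // i; apply/eqP.
  by move: hcard; rewrite leqn0 cards_eq0 => /eqP/setP/(_ i); rewrite !inE => /negbFE.
have [k hk|P0] := pickP (fun k => P k k != 0); last first.
  suff -> : P = 0 by rewrite mul0mx linear0.
  by apply: psd_eq0 => // i; apply/eqP/negbFE/P0.
have hkpos : 0 < P k k by rewrite lt_def hk -mxform_delta hP.
rewrite (mxtrace_schur_pivot P k Q) addr_ge0 //; last first.
  by rewrite mulr_ge0 ?invr_ge0 ?(ltW hkpos).
apply: IH => //; [|exact: schur_pivot_sym|exact: schur_pivot_psd].
by rewrite -ltnS (leq_trans (proper_card (schur_pivot_support hT hP hkpos))).
Qed.

Lemma mxtrace_conj_ge0 P Q W : P^T = P -> psdmx P -> psdmx Q -> W^T = W ->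
  0 <= \tr (P *m W *m Q *m W).
Proof.
move=> hT hP hQ hW.
have -> : P *m W *m Q *m W = P *m (W *m Q *m W) by rewrite !mulmxA.
apply: mxtrace_psd_mul_ge0 => // x.
by rewrite -mxformMr -{1}hW -mxformMl.
Qed.

Lemma mxtrace_conjC P Q X Y : P^T = P -> Q^T = Q -> X^T = X -> Y^T = Y ->
  \tr (P *m Y *m Q *m X) = \tr (P *m X *m Q *m Y).
Proof.
move=> hP hQ hX hY.
rewrite -mxtrace_tr !trmx_mul hP hQ hX hY mxtrace_mulC !mulmxA.
by rewrite -mulmxA (mxtrace_mulC (Q *m Y)) !mulmxA.
Qed.

Lemma mxtrace_cross_sqr_le P Q X Y :
  P^T = P -> Q^T = Q -> X^T = X -> Y^T = Y -> psdmx P -> psdmx Q ->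
  \tr (P *m X *m Q *m Y) ^+ 2
  <= \tr (P *m X *m Q *m X) * \tr (P *m Y *m Q *m Y).
Proof.
move=> hP hQ hX hY pP pQ.
apply: discriminant_le; first exact: mxtrace_conj_ge0.
move=> s; have hW : (X + s *: Y)^T = X + s *: Y by rewrite linearD /= linearZ /= hX hY.
have := mxtrace_conj_ge0 hP pP pQ hW.
rewrite !(mulmxDr, mulmxDl) -!(scalemxAr, scalemxAl) !linearD /= !linearZ /=.
by rewrite mxtrace_conjC //; congr (0 <= _); ring.
Qed.

Lemma mxtrace_mul_sum n P X Y (c : 'I_n -> R) (Q : 'I_n -> 'M[R]_p) :
  \tr (P *m (X *m (\sum_j c j *: Q j) *m Y)) = \sum_j c j * \tr (P *m X *m Q j *m Y).
Proof.
rewrite mulmx_sumr mulmx_suml mulmx_sumr linear_sum; apply: eq_bigr => j _.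
by rewrite -scalemxAr -scalemxAl -scalemxAr linearZ /= !mulmxA.
Qed.

End PositiveSemidefinite.

Section EuclideanNorm.
Variables (R : realType) (p : nat).
Implicit Types (x : 'cV[R]_p) (N : 'M[R]_p).

Lemma vnormE x : vnorm x = Num.sqrt (vdot x x).
Proof.
by rewrite /vnorm vdotE; congr Num.sqrt; apply: eq_bigr => i _; rewrite expr2.
Qed.

Lemma vnorm_ge0 x : 0 <= vnorm x.
Proof. by rewrite vnormE sqrtr_ge0. Qed.

Lemma vnorm_eq0 x : (vnorm x == 0) = (x == 0).
Proof.
rewrite vnormE sqrtr_eq0; apply/idP/eqP => [hx|->].
  by apply: vdot_eq0; apply/eqP; rewrite eq_le hx vdot_ge0.
by rewrite /vdot trmx0 mul0mx mxE.
Qed.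

Lemma vnormZ a x : vnorm (a *: x) = `|a| * vnorm x.
Proof.
rewrite !vnormE !vdot_mxform mxformZl mxformZr mulrA -expr2.
by rewrite sqrtrM ?sqr_ge0 // sqrtr_sqr.
Qed.

Local Open Scope classical_set_scope.

Lemma specnorm_contraction N : (forall x, vnorm (N *m x) <= vnorm x) ->
  [/\ 0 <= specnorm N, specnorm N <= 1 &
      forall x, vnorm (N *m x) <= specnorm N * vnorm x].
Proof.
move=> hN.
set E := [set vnorm (N *m x) | x in [set x : 'cV[R]_p | vnorm x <= 1]].
have v0 : vnorm (0 : 'cV[R]_p) = 0 by apply/eqP; rewrite vnorm_eq0.
have hE0 : E 0 by exists 0; rewrite /= ?v0 ?ler01 // mulmx0 v0.
have hub : ubound E 1 by move=> y [x /= hx <-]; apply: le_trans (hN x) hx.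
have hsup := ub_le_sup (ex_intro _ 1 hub : has_ubound E).
split; [exact: hsup | by apply: ge_sup => //; exists 0 | move=> x].
have [->|x0] := eqVneq x 0; first by rewrite mulmx0 v0 mulr0.
have hx : 0 < vnorm x by rewrite lt_def vnorm_eq0 x0 vnorm_ge0.
have hy : E (vnorm (N *m ((vnorm x)^-1 *: x))).
  exists ((vnorm x)^-1 *: x) => //=.
  by rewrite vnormZ ger0_norm ?invr_ge0 ?vnorm_ge0 // mulVf ?gt_eqF.
have := hsup _ hy.
rewrite -scalemxAr vnormZ ger0_norm ?invr_ge0 ?vnorm_ge0 // => h.
by rewrite -ler_pdivrMr // mulrC.
Qed.

End EuclideanNorm.

Section Resolvent.
Variables (R : realType) (n p : nat) (gamma : R) (S : 'I_n -> 'M[R]_p).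
Hypothesis gamma_gt0 : 0 < gamma.
Hypothesis S_sym : forall j, (S j)^T = S j.
Hypothesis S_psd : forall j, psdmx (S j).
Implicit Types (w : 'I_n -> R) (x z : 'cV[R]_p).

Definition Ssum w : 'M[R]_p := (n%:R)^-1 *: (\sum_(j < n) w j *: S j).
Definition Qinv w : 'M[R]_p := Ssum w + gamma%:M.

Definition IgQ w : 'M[R]_p := 1%:M - gamma *: invmx (Qinv w).

Lemma Ssum_sym w : (Ssum w)^T = Ssum w.
Proof.
rewrite /Ssum linearZ /= linear_sum /=; congr (_ *: _).
by apply: eq_bigr => j _; rewrite linearZ /= S_sym.
Qed.

Lemma mxform_Ssum w x y :
  mxform (Ssum w) x y = (n%:R)^-1 * \sum_j w j * mxform (S j) x y.
Proof.
rewrite /Ssum mxformZm mxform_summ; congr (_ * _).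
by apply: eq_bigr => j _; rewrite mxformZm.
Qed.

Lemma Ssum_psd w : (forall j, 0 <= w j) -> psdmx (Ssum w).
Proof.
move=> hw x; rewrite mxform_Ssum mulr_ge0 ?invr_ge0 ?ler0n //.
by apply: sumr_ge0 => j _; apply: mulr_ge0; [exact: hw | exact: S_psd].
Qed.

Lemma mxform_Ssum_le w w' x : (forall j, w j <= w' j) ->
  mxform (Ssum w) x x <= mxform (Ssum w') x x.
Proof.
move=> hw; rewrite !mxform_Ssum ler_wpM2l ?invr_ge0 ?ler0n //.
by apply: ler_sum => j _; apply: ler_wpM2r; [exact: S_psd | exact: hw].
Qed.

Lemma mxform_Qinv w x y : mxform (Qinv w) x y = mxform (Ssum w) x y + gamma * vdot x y.
Proof. by rewrite /Qinv mxformDm mxform_scalar. Qed.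

Lemma Qinv_sym w : (Qinv w)^T = Qinv w.
Proof. by rewrite /Qinv linearD /= Ssum_sym tr_scalar_mx. Qed.

Lemma invQ_sym w : (invmx (Qinv w))^T = invmx (Qinv w).
Proof. by rewrite trmx_inv Qinv_sym. Qed.

Lemma Qinv_unit w : (forall j, 0 <= w j) -> Qinv w \in unitmx.
Proof.
move=> hw; rewrite -row_free_unit; apply: inj_row_free => v hv.
have Qv : Qinv w *m v^T = 0 by rewrite -{1}Qinv_sym -trmx_mul hv trmx0.
have : mxform (Qinv w) v^T v^T = 0 by rewrite /mxform -mulmxA Qv mulmx0 mxE.
rewrite mxform_Qinv => h0.
have h1 := Ssum_psd hw v^T; have h2 := vdot_ge0 v^T.
have : vdot v^T v^T = 0.
  by apply/eqP; rewrite eq_le h2 andbT -(pmulr_rle0 _ gamma_gt0); lra.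
by move/vdot_eq0/(congr1 trmx); rewrite trmxK trmx0.
Qed.

Lemma mxtrace_invQB w w' P : Qinv w \in unitmx -> Qinv w' \in unitmx ->
  \tr (P *m invmx (Qinv w)) - \tr (P *m invmx (Qinv w')) =
  (n%:R)^-1 * \sum_j (w' j - w j) *
     \tr (P *m invmx (Qinv w) *m S j *m invmx (Qinv w')).
Proof.
move=> hA hA'; set X := invmx (Qinv w); set Y := invmx (Qinv w').
have resolvent : X - Y = X *m (Qinv w' - Qinv w) *m Y.
  by rewrite mulmxBr mulmxBl -mulmxA mulmxV // mulmx1 mulVmx // mul1mx.
have QB : Qinv w' - Qinv w = (n%:R)^-1 *: \sum_j (w' j - w j) *: S j.
  rewrite /Qinv /Ssum opprD addrACA subrr addr0 -scalerBr -sumrB.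
  by congr (_ *: _); apply: eq_bigr => j _; rewrite scalerBl.
rewrite -linearB /= -mulmxBr resolvent QB -scalemxAr -scalemxAl -scalemxAr.
by rewrite linearZ /= mxtrace_mul_sum.
Qed.

Lemma IgQ_mulQinv w z : Qinv w \in unitmx -> IgQ w *m (Qinv w *m z) = Ssum w *m z.
Proof.
move=> hU; rewrite /IgQ mulmxBl mul1mx -scalemxAl mulmxA mulVmx // mul1mx.
by rewrite /Qinv mulmxDl mul_scalar_mx addrK.
Qed.

Lemma vdot_Qinv w z :
  vdot (Qinv w *m z) (Qinv w *m z) =
  vdot (Ssum w *m z) (Ssum w *m z) + 2 * gamma * mxform (Ssum w) z z
  + gamma ^+ 2 * vdot z z.
Proof.
have -> : Qinv w *m z = Ssum w *m z + gamma *: z by rewrite /Qinv mulmxDl mul_scalar_mx.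
have h1 : (1%:M : 'M[R]_p)^T = 1%:M by rewrite tr_scalar_mx.
rewrite !vdot_mxform mxform_expand // -!vdot_mxform.
by rewrite (vdotC (Ssum w *m z) z) (vdot_mulmxr z).
Qed.

Lemma IgQ_contraction w x : (forall j, 0 <= w j) ->
  vnorm (IgQ w *m x) <= vnorm x.
Proof.
move=> hw; have hU := Qinv_unit hw.
set z := invmx (Qinv w) *m x.
have <- : Qinv w *m z = x by rewrite /z mulmxA mulmxV // mul1mx.
rewrite IgQ_mulQinv // !vnormE ler_sqrt ?vdot_ge0 // vdot_Qinv.
have := Ssum_psd hw z; have := vdot_ge0 z; move=> h1 h2.
have : 0 <= 2 * gamma * mxform (Ssum w) z z by rewrite !mulr_ge0 // ltW.
have : 0 <= gamma ^+ 2 * vdot z z by rewrite mulr_ge0 // sqr_ge0.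
lra.
Qed.

Lemma phiS_ge0 w : (forall j, 0 <= w j) -> 0 <= phiS gamma S w.
Proof.
by move=> hw; have [] := specnorm_contraction (fun x => IgQ_contraction x hw).
Qed.

Lemma phiS_le1 w : (forall j, 0 <= w j) -> phiS gamma S w <= 1.
Proof.
by move=> hw; have [] := specnorm_contraction (fun x => IgQ_contraction x hw).
Qed.

(** For [a = |M z|^2], [q = z^T M z], [r = |z|^2] and [M = Ssum w], the last
  hypothesis is the square of [|M z| <= psi |Qinv w *m z|]. *)
Lemma contraction_scalar_bound (a q r psi : R) :
  0 <= a -> 0 <= q -> 0 <= r -> 0 <= psi -> psi <= 1 ->
  q ^+ 2 <= r * a -> a <= psi ^+ 2 * (a + 2 * gamma * q + gamma ^+ 2 * r) ->
  (1 - psi) * q <= psi * gamma * r.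
Proof.
move=> ha hq hr hp hp1 hcs hA; rewrite leNgt; apply/negP => hc.
have hq0 : 0 < q.
  rewrite lt_def hq andbT; apply/eqP => q0; move: hc; rewrite q0 mulr0.
  by rewrite ltNge !mulr_ge0 // ltW.
have h1 : (1 - psi ^+ 2) * q ^+ 2 <= (1 - psi ^+ 2) * (r * a).
  by rewrite ler_wpM2l // subr_ge0 expr_le1.
have h2 : (1 - psi ^+ 2) * (r * a) <= r * (psi ^+ 2 * (2 * gamma * q + gamma ^+ 2 * r)).
  by rewrite mulrCA ler_wpM2l //; lra.
have h3 : 0 < (1 + psi) * q + psi * gamma * r.
  by rewrite ltr_pwDl ?mulr_gt0 // ?mulr_ge0 // ?ltW //; lra.
have : 0 < ((1 - psi) * q - psi * gamma * r) * ((1 + psi) * q + psi * gamma * r).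
  by rewrite mulr_gt0 // subr_gt0.
have -> : ((1 - psi) * q - psi * gamma * r) * ((1 + psi) * q + psi * gamma * r) =
  (1 - psi ^+ 2) * q ^+ 2 - r * (psi ^+ 2 * (2 * gamma * q + gamma ^+ 2 * r)) by ring.
lra.
Qed.

(** Loewner-order form of [||IgQ w|| <= phi]. *)
Definition IgQ_bound (phi : R) w :=
  forall z, (1 - phi) * mxform (Ssum w) z z <= phi * gamma * vdot z z.

Lemma IgQ_bound_le phi w w' : phi <= 1 -> (forall j, w j <= w' j) ->
  IgQ_bound phi w' -> IgQ_bound phi w.
Proof.
move=> phi1 hw hw' z; apply: le_trans (hw' z).
by rewrite ler_wpM2l ?subr_ge0 // mxform_Ssum_le.
Qed.

Lemma IgQ_bound_phiS w (phi : R) : (forall j, 0 <= w j) ->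
  phiS gamma S w <= phi -> phi <= 1 -> IgQ_bound phi w.
Proof.
move=> hw hle hle1 z; have hU := Qinv_unit hw.
have [h0 h1 hN] := specnorm_contraction (fun x => IgQ_contraction x hw).
have := hN (Qinv w *m z); rewrite IgQ_mulQinv // !vnormE => {}hN.
change (phiS gamma S w) with (specnorm (IgQ w)) in hle.
set psi := specnorm (IgQ w) in hle h0 h1 hN *.
set M := Ssum w in hN *.
have ha := vdot_ge0 (M *m z); have hq := Ssum_psd hw z; have hw0 := vdot_ge0 z.
have hsq : vdot (M *m z) (M *m z) <= psi ^+ 2 * vdot (Qinv w *m z) (Qinv w *m z).
  rewrite -(sqr_sqrtr ha) -(sqr_sqrtr (vdot_ge0 (Qinv w *m z))) -exprMn.
  by rewrite ler_pXn2r // ?nnegrE ?sqrtr_ge0 ?mulr_ge0 // sqrtr_ge0.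
rewrite vdot_Qinv -/M in hsq.
have hcs := cauchy_schwarz z (M *m z); rewrite vdot_mulmxr in hcs.
have := contraction_scalar_bound ha hq hw0 h0 h1 hcs hsq.
have : (1 - phi) * mxform M z z <= (1 - psi) * mxform M z z.
  by rewrite ler_wpM2r //; lra.
have : psi * gamma * vdot z z <= phi * gamma * vdot z z.
  by rewrite ler_wpM2r // ler_wpM2r // ltW.
lra.
Qed.

Section KeyEstimate.
Variables (b b' : 'I_n -> R) (phi : R).
Hypotheses (b_gt0 : forall j, 0 < b j) (b'_gt0 : forall j, 0 < b' j).
Hypotheses (b_bound : IgQ_bound phi b) (b'_bound : IgQ_bound phi b').

(** The bound makes [phi X - X (Ssum w) X] psd, where [X = invmx (Qinv w)]. *)
Lemma mxtrace_invQ_Ssum_le w P : Qinv w \in unitmx -> IgQ_bound phi w ->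
  P^T = P -> psdmx P ->
  (n%:R)^-1 * \sum_j w j * \tr (P *m invmx (Qinv w) *m S j *m invmx (Qinv w))
  <= phi * \tr (P *m invmx (Qinv w)).
Proof.
move=> hU hw hPT hP; set X := invmx (Qinv w).
have hXT : X^T = X by apply: invQ_sym.
have : 0 <= \tr (P *m (phi *: X - X *m Ssum w *m X)).
  apply: mxtrace_psd_mul_ge0 => // x.
  set z := X *m x.
  have hz : Qinv w *m z = x by rewrite /z mulmxA mulmxV // mul1mx.
  rewrite mxformBm mxformZm -{1 2}hz mxformMl mxformMr Qinv_sym mulmxV // mul1mx.
  rewrite -mxformMr -{1}hXT -mxformMl -/z mxform_Qinv.
  by have := hw z; lra.
rewrite mulmxBr linearB /= -scalemxAr linearZ /= subr_ge0.
by rewrite /Ssum -scalemxAr -scalemxAl -scalemxAr linearZ /= mxtrace_mul_sum.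
Qed.

Lemma mxtrace_invQB_le i t : 0 < t ->
  `|\tr (S i *m invmx (Qinv b)) - \tr (S i *m invmx (Qinv b'))|
  <= d_s b b' / 2 * (t * (phi * \tr (S i *m invmx (Qinv b)))
                     + phi * \tr (S i *m invmx (Qinv b')) / t).
Proof.
move=> ht.
have hU : Qinv b \in unitmx by apply: Qinv_unit => j; apply: ltW.
have hU' : Qinv b' \in unitmx by apply: Qinv_unit => j; apply: ltW.
have hX := mxtrace_invQ_Ssum_le hU b_bound (S_sym i) (S_psd i).
have hY := mxtrace_invQ_Ssum_le hU' b'_bound (S_sym i) (S_psd i).
set X := invmx (Qinv b) in hX *; set Y := invmx (Qinv b') in hY *.
have hXT : X^T = X := invQ_sym b; have hYT : Y^T = Y := invQ_sym b'.
set delta := d_s b b'; have hd : 0 <= delta := d_s_ge0 b b'.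
set u := fun j => \tr (S i *m X *m S j *m X) in hX.
set v := fun j => \tr (S i *m Y *m S j *m Y) in hY.
have hterm j : `|b' j - b j| * `|\tr (S i *m X *m S j *m Y)|
               <= delta / 2 * (t * (b j * u j) + b' j * v j / t).
  apply: rdist_cross_le; rewrite ?mxtrace_conj_ge0 ?rdist_le_d_s //.
  exact: mxtrace_cross_sqr_le.
have esum : \sum_j delta / 2 * (t * (b j * u j) + b' j * v j / t)
            = delta / 2 * (t * \sum_j b j * u j + (\sum_j b' j * v j) / t).
  by rewrite -mulr_sumr; congr (_ * _); rewrite big_split /= mulr_sumr mulr_suml.
have hn : 0 <= (n%:R : R)^-1 by rewrite invr_ge0 ler0n.
rewrite mxtrace_invQB // -/X -/Y normrM ger0_norm //.
apply: (le_trans (ler_wpM2l hn (ler_norm_sum _ _ _))).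
under eq_bigr => j _ do rewrite normrM.
apply: (le_trans (ler_wpM2l hn (ler_sum _ (fun j _ => hterm j)))).
rewrite esum; set A := \sum_j b j * u j in hX *; set A' := \sum_j b' j * v j in hY *.
have -> : (n%:R)^-1 * (delta / 2 * (t * A + A' / t))
          = delta / 2 * (t * ((n%:R)^-1 * A) + ((n%:R)^-1 * A') / t) by ring.
apply: ler_wpM2l; first by rewrite divr_ge0.
by apply: lerD; rewrite ?ler_pM2l ?ler_pM2r ?invr_gt0.
Qed.

Lemma mxtrace_invQ_rdist_le i :
  0 < \tr (S i *m invmx (Qinv b)) -> 0 < \tr (S i *m invmx (Qinv b')) ->
  rdist (\tr (S i *m invmx (Qinv b))) (\tr (S i *m invmx (Qinv b')))
  <= phi * d_s b b'.
Proof.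
set tX := \tr _; set tY := \tr _ => htX htY.
set sX := Num.sqrt tX; set sY := Num.sqrt tY.
have hsX : 0 < sX by rewrite sqrtr_gt0.
have hsY : 0 < sY by rewrite sqrtr_gt0.
rewrite /rdist ler_pdivrMr ?sqrtr_gt0 ?mulr_gt0 // sqrtrM ?(ltW htX) // -/sX -/sY.
apply: le_trans (mxtrace_invQB_le i (divr_gt0 hsY hsX)) _; rewrite -/tX -/tY.
have -> : tX = sX ^+ 2 by rewrite /sX sqr_sqrtr // ltW.
have -> : tY = sY ^+ 2 by rewrite /sY sqr_sqrtr // ltW.
by rewrite le_eqVlt; apply/orP; left; apply/eqP; field; rewrite !gt_eqF.
Qed.

End KeyEstimate.

Lemma d_s_LambdaS_le (D D' L L' : 'I_n -> R) phi :
  posdiag D -> posdiag D' -> is_LambdaS gamma S D L -> is_LambdaS gamma S D' L' ->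
  phiS gamma S D <= phi -> phiS gamma S D' <= phi -> phi <= 1 ->
  d_s L L' <= phi * d_s (eff_weight D L) (eff_weight D' L').
Proof.
move=> hD hD' [hL hLeq] [hL' hL'eq] phiD phiD' phi1.
have phi0 : 0 <= phi := le_trans (phiS_ge0 (fun j => ltW (hD j))) phiD.
have bound (E F : 'I_n -> R) : posdiag E -> posdiag F -> phiS gamma S E <= phi ->
    IgQ_bound phi (eff_weight E F).
  move=> hE hF hphi; apply: (IgQ_bound_le phi1 (fun j => eff_weight_le (hE j) (hF j))).
  exact: IgQ_bound_phiS (fun j => ltW (hE j)) hphi phi1.
apply: d_s_le => [|i]; first by rewrite mulr_ge0 ?d_s_ge0.
have hn : 0 < (n%:R : R)^-1 by rewrite invr_gt0 ltr0n (leq_ltn_trans _ (ltn_ord i)).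
have htr : 0 < \tr (S i *m invmx (Qinv (eff_weight D L))).
  by rewrite -(pmulr_rgt0 _ hn) -hLeq.
have htr' : 0 < \tr (S i *m invmx (Qinv (eff_weight D' L'))).
  by rewrite -(pmulr_rgt0 _ hn) -hL'eq.
rewrite hLeq hL'eq rdistZ //.
exact: (mxtrace_invQ_rdist_le (eff_weight_gt0 hD hL) (eff_weight_gt0 hD' hL')
  (bound _ _ hD hL phiD) (bound _ _ hD' hL' phiD')).
Qed.

End Resolvent.

Theorem proposition5 (R : realType) (n p : nat) (gamma : R)
  (S : 'I_n -> 'M[R]_p) :
  0 < gamma ->
  (forall i, psd_sym (S i) /\ S i != 0) ->
  forall D D' L L' : 'I_n -> R,
    posdiag D -> posdiag D' ->
    is_LambdaS gamma S D L -> is_LambdaS gamma S D' L' ->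
    d_s L L' <= Num.max (phiS gamma S D) (phiS gamma S D') * d_s D D'
    /\ d_s L L' <= d_s D D'.
Proof.
move=> hg hS D D' L L' hD hD' hLD hLD'.
have hT j : (S j)^T = S j by case: (hS j) => [[]].
have hP j : psdmx (S j) by case: (hS j) => [[_ h] _].
have hD0 j : 0 <= D j := ltW (hD j); have hD'0 j : 0 <= D' j := ltW (hD' j).
have hL := proj1 hLD; have hL' := proj1 hLD'.
set phi := Num.max _ _.
have phiD : phiS gamma S D <= phi by rewrite le_max lexx.
have phiD' : phiS gamma S D' <= phi by rewrite le_max lexx orbT.
have phi0 : 0 <= phi := le_trans (phiS_ge0 hg hT hP hD0) phiD.
have phi1 : phi <= 1 by rewrite ge_max (phiS_le1 hg hT hP hD0) (phiS_le1 hg hT hP hD'0).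
have dL := d_s_LambdaS_le hg hT hP hD hD' hLD hLD' phiD phiD' phi1.
have stable : d_s L L' <= d_s D D'.
  rewrite leNgt; apply/negP => hlt.
  have := d_s_eff_weight_lt hD hD' hL hL' hlt (lexx _).
  by rewrite ltNge (le_trans dL) // ler_piMl ?d_s_ge0.
split=> //; apply: le_trans dL _.
by rewrite ler_wpM2l // d_s_eff_weight_le.
Qed.
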